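(* Let $C$ be an $\mathbb F_q$-linear $(n,q^k,d)_{q^h}$ code over $\mathbb F_{q^h}$, and let $\mathcal A=\{\pi_1,\dots,\pi_n\}$ be an associated projective $h$-system in $\mathrm{PG}(k-1,q)$, where $\pi_j$ corresponds to coordinate position $j$. Then, for each $i\in[1,n]$, the projective $h$-systems associated to the projection of $C$ from position $i$ are (up to $\mathrm{PGL}$-equivalence) equal to the projection of $\mathcal A$ from $\pi_i$.
   Context: An $\mathbb F_q$-linear code over $\mathbb F_{q^h}$ is an $\mathbb F_q$-subspace of $\mathbb F_{q^h}^n$; here it has $q^k$ codewords, i.e. $\mathbb F_q$-dimension $k$. Associated projective $h$-system: let $G\in\mathbb F_{q^h}^{k\times n}$ have rows forming an $\mathbb F_q$-basis of $C$, fix an $\mathbb F_q$-basis $\alpha=(\alpha_1,\dots,\alpha_h)^t$ of $\mathbb F_{q^h}$, write the $j$-th column of $G$ as $G_j\alpha$ with $G_j\in\mathbb F_q^{k\times h}$, and let $\pi_j$ be the projective subspace of $\mathrm{PG}(k-1,q)$ given by the column space of $G_j$; the multiset $\{\pi_1,\dots,\pi_n\}$ is an associated projective $h$-system (these form a $\mathrm{PGL}(k,q)$-orbit). The projection of $C$ from position $i$ is $\{(x_1,\dots,x_{i-1},x_{i+1},\dots,x_n):(x_1,\dots,x_{i-1},0,x_{i+1},\dots,x_n)\in C\}$. For a subspace $U$ of $V=\mathbb F_q^k$, the projection from $U$ maps a subspace $W$ of $V$ to $(W+U)/U$ in $V/U$; this induces a map from subspaces of $\mathrm{PG}(V)$ to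 subspaces of $\mathrm{PG}(V/U)$. The projection of $\mathcal A$ from $\pi_i$ is the multiset of images of the elements of $\mathcal A\setminus\{\pi_i\}$ (as a multiset, removing the single element $\pi_i$) under projection from the subspace corresponding to $\pi_i$. *)

From HB Require Import structures.
From mathcomp Require Import all_boot all_order all_algebra all_field.
Set Implicit Arguments. Unset Strict Implicit. Unset Printing Implicit Defensive.
Import GRing.Theory.
Local Open Scope ring_scope.

(* F plays the role of F_q, L the role of F_{q^h} (a finite extension of F). *)
Section Codes.
Variables (F : finFieldType) (L : fieldExtType F).

Definition cw (k n : nat) (G : 'M[L]_(k, n)) (u : 'rV[F]_k) : 'rV[L]_n :=
  \row_j \sum_(i < k) u 0 i *: G i j.

Definition is_gen_mx (k n : nat) (C : 'rV[L]_n -> Prop) (G : 'M[L]_(k, n)) :=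
  (forall u, cw G u = 0 -> u = 0) /\ (forall x, C x <-> exists u, x = cw G u).

Definition proj_code (n : nat) (C : 'rV[L]_n.+1 -> Prop) (i : 'I_n.+1)
  (y : 'rV[L]_n) : Prop :=
  exists x, C x /\ x 0 i = 0 /\ forall j : 'I_n, y 0 j = x 0 (lift i j).

(* G_j in F^{k x h} with j-th column of G equal to G_j alpha. *)
Definition Gcol (h k n : nat) (alpha : h.-tuple L) (G : 'M[L]_(k, n)) (j : 'I_n)
  : 'M[F]_(k, h) := \matrix_(i < k, l < h) coord alpha l (G i j).

(* pi_j = column space of G_j, represented as the row space of G_j^T
   (a subspace of F^k = 'rV_k). *)
Definition hsys (h k n : nat) (alpha : h.-tuple L) (G : 'M[L]_(k, n)) (j : 'I_n)
  : 'M[F]_(h, k) := (Gcol alpha G j)^T.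
End Codes.

(* Projection of the system A = {A_0..A_n} from A_i, followed by a linear
   isomorphism V/U ~ F^k' (U = <A_i>): realised as a surjective linear map
   M : F^k -> F^k' with kernel exactly U; the multiset {A_j : j <> i} is
   mapped onto the multiset B via a bijection sigma of the index sets. *)
Definition proj_sys_equiv (F : fieldType) (h k k' n : nat)
  (A : 'I_n.+1 -> 'M[F]_(h, k)) (i : 'I_n.+1) (B : 'I_n -> 'M[F]_(h, k')) :=
  exists (M : 'M[F]_(k, k')) (sigma : 'I_n -> 'I_n),
    [/\ bijective sigma, \rank M = k', (kermx M == A i)%MS &
        forall j : 'I_n, (A (lift i j) *m M == B (sigma j))%MS].

From HB Require Import structures.
From mathcomp Require Import all_boot all_order all_algebra all_field.
Local Open Scope ring_scope.
Set Implicit Arguments. Unset Strict Implicit.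
Import GRing.Theory.

(* Lifting every row of G' to a codeword of C vanishing at position i gives a
   matrix P over F whose rows form a basis of the left kernel of G_i.  Then
   G'_j = P G_(lift i j) in a common basis of L over F (changing the basis
   does not change the row spaces), so pi'_j is the image of pi_(lift i j)
   under P^T, and P^T : F^k -> F^k' is onto with kernel (ker G_i)^perp = pi_i. *)

Lemma kermx_tr_eqmx (F : fieldType) (m h k : nat)
    (P : 'M[F]_(m, k)) (A : 'M[F]_(h, k)) :
  (P :=: kermx A^T)%MS -> (kermx P^T == A)%MS.
Proof.
move=> eqPK.
have subA : (A <= kermx P^T)%MS.
  have PA : P *m A^T = 0 by apply/eqP; rewrite -sub_kermx eqPK.
  by rewrite sub_kermx -[A]trmxK -trmx_mul PA trmx0.
apply/andP; split => //; rewrite -(mxrank_leqif_sup subA).2; apply/eqP.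
by rewrite mxrank_ker mxrank_tr eqPK mxrank_ker mxrank_tr subKn ?rank_leq_col.
Qed.

Section CodeWords.
Variables (F : finFieldType) (L : fieldExtType F).

Lemma cw_delta (k n : nat) (G : 'M[L]_(k, n)) (s : 'I_k) :
  cw G (delta_mx 0 s) = row s G.
Proof.
apply/rowP => j; rewrite !mxE (bigD1 s) //= big1 ?addr0.
  by rewrite mxE !eqxx scale1r.
by move=> r /negPf nrs; rewrite mxE nrs andbF scale0r.
Qed.

Lemma cwB (k n : nat) (G : 'M[L]_(k, n)) u v : cw G (u - v) = cw G u - cw G v.
Proof.
apply/rowP => j; rewrite !mxE -sumrB; apply: eq_bigr => r _.
by rewrite !mxE scalerBl.
Qed.

Lemma cw_mulmx (k k' n : nat) (G : 'M[L]_(k, n)) (P : 'M[F]_(k', k)) w m :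
  cw G (w *m P) 0 m = \sum_s w 0 s *: cw G (row s P) 0 m.
Proof.
rewrite mxE; under eq_bigr => r _ do rewrite mxE scaler_suml.
rewrite exchange_big /=; apply: eq_bigr => s _.
rewrite mxE scaler_sumr; apply: eq_bigr => r _.
by rewrite mxE scalerA.
Qed.

Lemma gen_mx_cw_inj (k n : nat) (C : 'rV[L]_n -> Prop) (G : 'M[L]_(k, n)) :
  is_gen_mx C G -> injective (cw G).
Proof.
move=> [injG _] u v eq_uv; apply/eqP; rewrite -subr_eq0; apply/eqP.
by apply: injG; rewrite cwB eq_uv subrr.
Qed.

Variables (h : nat) (alpha : h.-tuple L).

Lemma coord_cw (k n : nat) (G : 'M[L]_(k, n)) u m l :
  coord alpha l (cw G u 0 m) = (u *m Gcol alpha G m) 0 l.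
Proof.
rewrite !mxE linear_sum; apply: eq_bigr => r _.
by rewrite linearZ /= !mxE.
Qed.

Lemma cw_eq0 (k n : nat) (G : 'M[L]_(k, n)) u m :
  basis_of fullv alpha -> (cw G u 0 m == 0) = (u *m Gcol alpha G m == 0).
Proof.
move=> ba; apply/eqP/eqP => [cw0|uG0].
  by apply/rowP => l; rewrite -coord_cw cw0 linear0 mxE.
rewrite (coord_basis ba (memvf (cw G u 0 m))).
by apply: big1 => l _; rewrite coord_cw uG0 mxE scale0r.
Qed.

Lemma hsys_basis_sub (beta : h.-tuple L) (k n : nat) (G : 'M[L]_(k, n)) m :
  basis_of fullv beta -> (hsys alpha G m <= hsys beta G m)%MS.
Proof.
move=> bb; pose T : 'M[F]_h := \matrix_(l, l2) coord alpha l beta`_l2.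
suff -> : hsys alpha G m = T *m hsys beta G m by exact: submxMl.
apply/matrixP => l r; rewrite !mxE.
rewrite {1}(coord_basis bb (memvf (G r m))) linear_sum.
by apply: eq_bigr => l2 _; rewrite linearZ /= !mxE mulrC.
Qed.

End CodeWords.

Lemma hsys_basis_eqmx (F : finFieldType) (L : fieldExtType F) (h k n : nat)
    (beta gamma : h.-tuple L) (G : 'M[L]_(k, n)) m :
  basis_of fullv beta -> basis_of fullv gamma ->
  (hsys beta G m :=: hsys gamma G m)%MS.
Proof. by move=> bb bg; apply/eqmxP; rewrite !hsys_basis_sub. Qed.

Section LiftMatrix.
Variables (F : finFieldType) (L : fieldExtType F) (k k' n : nat).
Variables (C : 'rV[L]_n.+1 -> Prop) (G : 'M[L]_(k, n.+1)).
Variables (i : 'I_n.+1) (G' : 'M[L]_(k', n)).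
Hypotheses (genG : is_gen_mx C G) (genG' : is_gen_mx (proj_code C i) G').

Lemma exists_lift_mx : exists P : 'M[F]_(k', k),
  (forall w, cw G (w *m P) 0 i = 0) /\
  (forall w j, cw G (w *m P) 0 (lift i j) = cw G' w 0 j).
Proof.
have lift_row s : exists u, cw G u 0 i = 0 /\
    forall j, G' s j = cw G u 0 (lift i j).
  have : proj_code C i (row s G').
    by apply/genG'.2; exists (delta_mx 0 s); rewrite cw_delta.
  case=> x [/genG.2 [u ->] [ui0 u_lift]]; exists u; split => // j.
  by rewrite -u_lift mxE.
have [p p_lift] := fin_all_exists lift_row.
pose P : 'M[F]_(k', k) := \matrix_(s, r) p s 0 r.
have rowPp s : row s P = p s by apply/rowP => r; rewrite !mxE.
exists P; split => [w|w j]; rewrite cw_mulmx.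
  by rewrite big1 // => s _; rewrite rowPp (p_lift s).1 scaler0.
by rewrite mxE; apply: eq_bigr => s _; rewrite rowPp -(p_lift s).2.
Qed.

Variable P : 'M[F]_(k', k).
Hypotheses (cwP_vanish : forall w, cw G (w *m P) 0 i = 0)
           (cwP_lift : forall w j, cw G (w *m P) 0 (lift i j) = cw G' w 0 j).

Lemma lift_mx_row_free : row_free P.
Proof.
apply: inj_row_free => w wP0; apply: genG'.1; apply/rowP => j.
by rewrite -cwP_lift wP0 !mxE big1 // => r _; rewrite mxE scale0r.
Qed.

Lemma lift_mx_onto u : cw G u 0 i = 0 -> exists w, u = w *m P.
Proof.
move=> ui0.
have : proj_code C i (\row_j cw G u 0 (lift i j)).
  exists (cw G u); split; first by apply/genG.2; exists u.
  by split => // j; rewrite mxE.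
move=> /genG'.2 [w wE]; exists w; apply: (gen_mx_cw_inj genG).
apply/rowP => m; case: (unliftP i m) => [j ->|->].
  by rewrite cwP_lift -wE [RHS]mxE.
by rewrite cwP_vanish ui0.
Qed.

Lemma lift_mx_eqmx_ker (h : nat) (alpha : h.-tuple L) :
  basis_of fullv alpha -> (P :=: kermx (Gcol alpha G i))%MS.
Proof.
move=> ba; apply/eqmxP/andP; split; apply/row_subP => r.
  by rewrite sub_kermx rowE -(cw_eq0 _ _ _ ba) cwP_vanish.
have /lift_mx_onto [w ->] : cw G (row r (kermx (Gcol alpha G i))) 0 i = 0.
  by apply/eqP; rewrite (cw_eq0 _ _ _ ba) -row_mul mulmx_ker row0.
exact: submxMl.
Qed.

Lemma Gcol_lift_mx (h : nat) (alpha : h.-tuple L) j :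
  Gcol alpha G' j = P *m Gcol alpha G (lift i j).
Proof.
apply/matrixP => s l; rewrite mxE.
have -> : G' s j = cw G' (delta_mx 0 s) 0 j by rewrite cw_delta mxE.
by rewrite -cwP_lift coord_cw -mulmxA -rowE mxE.
Qed.

End LiftMatrix.

Theorem lemma3p10 (F : finFieldType) (L : fieldExtType F) (h k n : nat)
  (alpha : h.-tuple L) (C : 'rV[L]_n.+1 -> Prop) (G : 'M[L]_(k, n.+1))
  (i : 'I_n.+1) (k' : nat) (alpha' : h.-tuple L) (G' : 'M[L]_(k', n)) :
  basis_of fullv alpha -> basis_of fullv alpha' ->
  is_gen_mx C G -> is_gen_mx (proj_code C i) G' ->
  proj_sys_equiv (hsys alpha G) i (hsys alpha' G').
Proof.
move=> ba ba' genG genG'.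
have [P [cwP_vanish cwP_lift]] := exists_lift_mx genG genG'.
exists P^T, id; split.
- by exists id.
- by rewrite mxrank_tr; apply/eqP/(lift_mx_row_free genG' cwP_lift).
- apply: kermx_tr_eqmx; rewrite /hsys trmxK.
  exact (lift_mx_eqmx_ker genG genG' cwP_vanish cwP_lift ba).
- move=> j; rewrite [hsys alpha' G' j]/hsys (Gcol_lift_mx cwP_lift) trmx_mul.
  exact/eqmxP/eqmxMr/(hsys_basis_eqmx _ _ ba ba').
Qed.
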